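(* In every standard NML model, for names $\mathsf a,\mathsf b{:}\alpha$ and patterns $\phi,\psi,\phi_i$: (1) $\text{И}\mathsf a.\phi\wedge\text{И}\mathsf a.\psi\iff\text{И}\mathsf a.(\phi\wedge\psi)$; in particular $\text{И}\mathsf a.(\phi\wedge\psi)\iff(\text{И}\mathsf a.\phi)\wedge\psi$ if $\mathsf a$ is not free in $\psi$; likewise $\text{И}\mathsf a.\phi\vee\text{И}\mathsf a.\psi\iff\text{И}\mathsf a.(\phi\vee\psi)$. (2) $\neg\,\text{И}\mathsf a.\phi\iff\text{И}\mathsf a.\neg\phi$. (3) For distinct names $\mathsf a,\mathsf b$: $[\mathsf a](\text{И}\mathsf b.\phi)\iff\text{И}\mathsf b.[\mathsf a]\phi$. (4) $\langle\text{И}\mathsf a.\phi,\psi\rangle\iff\text{И}\mathsf a.\langle\phi,\psi\rangle$ if $\mathsf a$ does not occur free in $\psi$. More generally, if $\sigma$ is a symbol such that for all elements $v_1,\dots,v_n$, all $w\in\sigma_M(v_1,\dots,v_n)$ and every atom $a$, $a\notin supp(w)$ implies $a\notin supp(v_i)$ for all $i$, then $\sigma(\text{И}\mathsf a.\phi_1,\dots,\text{И}\mathsf a.\phi_n)\iff\text{И}\mathsf a.\sigma(\phi_1,\dots,\phi_n)$.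
   Context: NML patterns: $\phi::= x \mid \mathsf a \mid \phi\wedge\psi\mid\neg\phi\mid\exists x.\phi\mid\sigma(\phi_1,\dots,\phi_n)\mid \text{И}\mathsf a{:}\alpha.\phi$ (names a separate syntactic class, И binds names); $\vee$ is defined from $\wedge,\neg$; $\langle-,-\rangle$ is the pairing symbol of product sorts; $[\mathsf a]\phi$ is the abstraction symbol. NML models: atoms $\mathbb A=\bigcup_\alpha\mathbb A_\alpha$, $G$ the sort-respecting permutations; carriers are nonempty nominal $G$-sets; symbols are equivariant maps $\sigma_M$ into sets. Standard models interpret name sorts as $\mathbb A_\alpha$, $Pred$ as $\{\star\}$, $[\alpha]\tau$ as the nominal abstraction set $[\mathbb A_\alpha]M_\tau$ (pairs modulo $\alpha$-equivalence), abstraction as the quotient map, pairing canonically, and swapping/concretion/freshness canonically. Valuations: finite-domain, sort-respecting, finitely supported, injective on names. Semantics: $[\![x]\!]_\rho=\{\rho(x)\}$, $[\![\mathsf a]\!]_\rho=\{\rho(\mathsf a)\}$, $[\![\sigma(\vec\phi)]\!]_\rho=\bigcup\{\sigma_M(\vec v)\mid v_i\in[\![\phi_i]\!]_\rho\}$, $\wedge$ intersection, $\neg$ complement, $\exists$ union over values, $[\![\text{И}\mathsf a{:}\alpha.\phi]\!]_\rho=\bigcup_{a\in\mathbb A_\alpha\setminus supp(\rho)}\{v\in[\![\phi]\!]_{\rho[a/\mathsf a]}\mid a\notin supp(v)\}$. $\phi\iff\psi$ means equal denotations under every suitable valuation. *)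

From Stdlib Require Import List Classical ClassicalEpsilon Arith.
Import ListNotations.



Definition dec (P : Prop) : bool :=
  if excluded_middle_informative P then true else false.

Lemma decP (P : Prop) : dec P = true <-> P.
Proof. unfold dec; destruct (excluded_middle_informative P); intuition discriminate. Qed.

Section NML.

Context (NS : Type).

(* atoms: A = \bigcup_alpha A_alpha, with A_alpha = {alpha} x nat (countably infinite) *)
Definition atom : Type := (NS * nat)%type.
Definition asort (a : atom) : NS := fst a.

Record perm := {
  pf : atom -> atom;
  pinv : atom -> atom;
  pinvK : forall a, pinv (pf a) = a;
  pfK : forall a, pf (pinv a) = a;
  psort : forall a, asort (pf a) = asort a;
  pfinite : exists L : list atom, forall a, pf a <> a -> In a L }.

Definition swapf (a b c : atom) : atom :=
  if dec (c = a) then b else if dec (c = b) then a else c.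

Lemma dec_true {P : Prop} : P -> dec P = true.
Proof. intro H; apply decP; exact H. Qed.
Lemma dec_false {P : Prop} : ~ P -> dec P = false.
Proof. intro H; unfold dec; destruct (excluded_middle_informative P); [contradiction | reflexivity]. Qed.

Lemma swapfK a b c : swapf a b (swapf a b c) = c.
Proof.
  unfold swapf.
  destruct (classic (c = a)) as [E1|E1].
  - rewrite (dec_true E1); subst.
    destruct (classic (b = a)) as [E2|E2].
    + rewrite (dec_true E2); auto.
    + rewrite (dec_false E2), (dec_true (eq_refl b)); auto.
  - rewrite (dec_false E1).
    destruct (classic (c = b)) as [E2|E2].
    + rewrite (dec_true E2), (dec_true (eq_refl a)); auto.
    + rewrite (dec_false E2), (dec_false E1), (dec_false E2); auto.
Qed.

Lemma swapf_sort a b (H : asort a = asort b) c : asort (swapf a b (c)) = asort c.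
Proof.
  unfold swapf.
  destruct (classic (c = a)) as [E1|E1]; [rewrite (dec_true E1); subst; auto|].
  rewrite (dec_false E1).
  destruct (classic (c = b)) as [E2|E2]; [rewrite (dec_true E2); subst; auto|].
  rewrite (dec_false E2); auto.
Qed.

Lemma swapf_fin a b : exists L : list atom, forall c, swapf a b c <> c -> In c L.
Proof.
  exists [a; b]; intros c Hc; unfold swapf in Hc.
  destruct (classic (c = a)) as [E1|E1]; [subst; simpl; auto|].
  destruct (classic (c = b)) as [E2|E2]; [subst; simpl; auto|].
  rewrite (dec_false E1), (dec_false E2) in Hc; congruence.
Qed.

Definition pswap (a b : atom) (H : asort a = asort b) : perm :=
  {| pf := swapf a b; pinv := swapf a b;
     pinvK := swapfK a b; pfK := swapfK a b;
     psort := swapf_sort a b H; pfinite := swapf_fin a b |}.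

Arguments pswap {a b}.

Definition supports (T : Type) (act : perm -> T -> T) (L : list atom) (x : T) : Prop :=
  forall p : perm, (forall a, In a L -> pf p a = a) -> act p x = x.

Arguments supports {T}.

(* a \in supp(x): the least finite support = intersection of all finite supports *)
Definition in_supp (T : Type) (act : perm -> T -> T) (a : atom) (x : T) : Prop :=
  forall L, supports act L x -> In a L.

Arguments in_supp {T}.

Record nomset := {
  ncar :> Type;
  nact : perm -> ncar -> ncar;
  nact_id : forall p x, (forall a, pf p a = a) -> nact p x = x;
  nact_comp : forall p q r x, (forall a, pf r a = pf p (pf q a)) ->
                nact r x = nact p (nact q x);
  nfin : forall x, exists L, supports nact L x;
  ninh : inhabited ncar }.
Arguments nact : clear implicits.

Context (BS : Type).

Inductive sort :=
| SName (al : NS)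
| SBase (b : BS)
| SPred
| SAbs (al : NS) (t : sort)
| SProd (t1 t2 : sort).

Record carrier := { cT : Type; cact : perm -> cT -> cT }.
Arguments cact : clear implicits.

(* nominal abstraction [A_alpha]C: alpha-equivalence classes of pairs *)
Definition alpha_class (C : carrier) (a : atom) (x : cT C) : atom * cT C -> Prop :=
  fun bz => (fst bz = a /\ snd bz = x) \/
            (exists H : asort (fst bz) = asort a,
                ~ in_supp (cact C) (fst bz) x /\ snd bz = cact C (pswap H) x).

Arguments alpha_class : clear implicits.

Definition absT (al : NS) (C : carrier) : Type :=
  { S : atom * cT C -> Prop | exists a x, asort a = al /\ S = alpha_class C a x }.

Definition abs_mk (al : NS) (C : carrier) (a : atom) (Ha : asort a = al) (x : cT C)
  : absT al C :=
  exist _ (alpha_class C a x) (ex_intro _ a (ex_intro _ x (conj Ha eq_refl))).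

Arguments abs_mk : clear implicits.

Definition abs_act (al : NS) (C : carrier) (p : perm) (S : absT al C) : absT al C :=
  let (a, Ha) := constructive_indefinite_description _ (proj2_sig S) in
  let (x, Hx) := constructive_indefinite_description _ Ha in
  abs_mk al C (pf p a) (eq_trans (psort p a) (proj1 Hx)) (cact C p x).

Definition abs_carrier (al : NS) (C : carrier) : carrier :=
  {| cT := absT al C; cact := @abs_act al C |}.

Definition name_act (al : NS) (p : perm) (a : {a : atom | asort a = al})
  : {a : atom | asort a = al} :=
  exist _ (pf p (proj1_sig a)) (eq_trans (psort p _) (proj2_sig a)).

Fixpoint carr (B : BS -> nomset) (s : sort) : carrier :=
  match s with
  | SName al => {| cT := {a : atom | asort a = al}; cact := @name_act al |}
  | SBase b => {| cT := ncar (B b); cact := nact (B b) |}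
  | SPred => {| cT := unit; cact := fun _ u => u |}
  | SAbs al t => abs_carrier al (carr B t)
  | SProd t1 t2 =>
      {| cT := (cT (carr B t1) * cT (carr B t2))%type;
         cact := fun p x => (cact _ p (fst x), cact _ p (snd x)) |}
  end.

Definition M (B : BS -> nomset) (s : sort) : Type := cT (carr B s).
Definition mact (B : BS -> nomset) (s : sort) : perm -> M B s -> M B s := cact (carr B s).

Fixpoint tup (B : BS -> nomset) (l : list sort) : Type :=
  match l with
  | [] => unit
  | s :: l => (M B s * tup B l)%type
  end.

Fixpoint tact (B : BS -> nomset) (l : list sort) (p : perm) : tup B l -> tup B l :=
  match l return tup B l -> tup B l with
  | [] => fun u => u
  | s :: l => fun vs => (mact B s p (fst vs), tact B l p (snd vs))
  end.

Context (Sym : Type) (arity : Sym -> list sort) (res : Sym -> sort).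

Inductive symbol :=
| UserSym (f : Sym)
| SymPair (t1 t2 : sort)
| SymAbs (al : NS) (t : sort)
| SymSwap (al : NS) (t : sort)
| SymConc (al : NS) (t : sort)
| SymFresh (al : NS) (t : sort).

Definition sym_arity (sg : symbol) : list sort :=
  match sg with
  | UserSym f => arity f
  | SymPair t1 t2 => [t1; t2]
  | SymAbs al t => [SName al; t]
  | SymSwap al t => [SName al; SName al; t]
  | SymConc al t => [SAbs al t; SName al]
  | SymFresh al t => [SName al; t]
  end.

Definition sym_res (sg : symbol) : sort :=
  match sg with
  | UserSym f => res f
  | SymPair t1 t2 => SProd t1 t2
  | SymAbs al t => SAbs al t
  | SymSwap al t => t
  | SymConc al t => t
  | SymFresh al t => SPred
  end.

Record std_model := {
  base : BS -> nomset;
  usym : forall f : Sym, tup base (arity f) -> M base (res f) -> Prop;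
  usym_equiv : forall f p vs w,
      usym f (tact base (arity f) p vs) (mact base (res f) p w) <-> usym f vs w }.

Definition sort_eq2 (al : NS) (a b : {a : atom | asort a = al}) :
  asort (proj1_sig a) = asort (proj1_sig b) :=
  eq_trans (proj2_sig a) (eq_sym (proj2_sig b)).

Definition sym_int (Mo : std_model) (sg : symbol) :
  tup (base Mo) (sym_arity sg) -> M (base Mo) (sym_res sg) -> Prop :=
  match sg return tup (base Mo) (sym_arity sg) -> M (base Mo) (sym_res sg) -> Prop with
  | UserSym f => usym Mo f
  | SymPair t1 t2 => fun vs w => w = (fst vs, fst (snd vs))
  | SymAbs al t => fun vs w =>
      w = abs_mk al (carr (base Mo) t) (proj1_sig (fst vs)) (proj2_sig (fst vs)) (fst (snd vs))
  | SymSwap al t => fun vs w =>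
      w = mact (base Mo) t (pswap (sort_eq2 al (fst vs) (fst (snd vs)))) (fst (snd (snd vs)))
  | SymConc al t => fun vs w => proj1_sig (fst vs) (proj1_sig (fst (snd vs)), w)
  | SymFresh al t => fun vs _ =>
      ~ in_supp (mact (base Mo) t) (proj1_sig (fst vs)) (fst (snd vs))
  end.

Inductive pat : sort -> Type :=
| PVar (s : sort) (n : nat) : pat s
| PName (al : NS) (n : nat) : pat (SName al)
| PAnd (s : sort) : pat s -> pat s -> pat s
| PNot (s : sort) : pat s -> pat s
| PEx (s : sort) (t : sort) (n : nat) : pat s -> pat s
| PApp (sg : symbol) : pats (sym_arity sg) -> pat (sym_res sg)
| PNew (s : sort) (al : NS) (n : nat) : pat s -> pat s
with pats : list sort -> Type :=
| PNil : pats []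
| PCons (s : sort) (l : list sort) : pat s -> pats l -> pats (s :: l).

Arguments PAnd {s}.
Arguments PNot {s}.
Arguments PEx {s}.
Arguments PNew {s}.
Arguments PCons {s l}.

Definition POr (s : sort) (p q : pat s) : pat s := PNot (PAnd (PNot p) (PNot q)).

Fixpoint map_new (al : NS) (n : nat) (l : list sort) (ps : pats l) : pats l :=
  match ps in pats l return pats l with
  | PNil => PNil
  | PCons p ps => PCons (PNew al n p) (map_new al n _ ps)
  end.

Fixpoint name_free (al : NS) (n : nat) (s : sort) (p : pat s) : Prop :=
  match p with
  | PVar _ _ => False
  | PName be m => be = al /\ m = n
  | PAnd p q => name_free al n _ p \/ name_free al n _ q
  | PNot p => name_free al n _ p
  | PEx _ _ p => name_free al n _ p
  | PApp _ ps => names_free al n _ ps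
  | PNew be m p => ~ (be = al /\ m = n) /\ name_free al n _ p
  end
with names_free (al : NS) (n : nat) (l : list sort) (ps : pats l) : Prop :=
  match ps with
  | PNil => False
  | PCons p ps => name_free al n _ p \/ names_free al n _ ps
  end.

Fixpoint var_free (t : sort) (n : nat) (s : sort) (p : pat s) : Prop :=
  match p with
  | PVar u m => u = t /\ m = n
  | PName _ _ => False
  | PAnd p q => var_free t n _ p \/ var_free t n _ q
  | PNot p => var_free t n _ p
  | PEx u m p => ~ (u = t /\ m = n) /\ var_free t n _ p
  | PApp _ ps => vars_free t n _ ps
  | PNew _ _ p => var_free t n _ p
  end
with vars_free (t : sort) (n : nat) (l : list sort) (ps : pats l) : Prop :=
  match ps with
  | PNil => False
  | PCons p ps => var_free t n _ p \/ vars_free t n _ ps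
  end.

Section Semantics.
Context (Mo : std_model).
Let B := base Mo.

Record env := {
  evar : forall s : sort, nat -> option (M B s);
  ename : NS -> nat -> option atom }.

Definition wf_env (e : env) : Prop :=
  (exists L : list (sort * nat), forall s n, evar e s n <> None -> In (s, n) L) /\
  (exists L : list (NS * nat), forall al n, ename e al n <> None -> In (al, n) L) /\
  (forall al n a, ename e al n = Some a -> asort a = al) /\
  (forall s n v, evar e s n = Some v -> exists L, supports (mact B s) L v) /\
  (forall al be n m a, ename e al n = Some a -> ename e be m = Some a ->
                       al = be /\ n = m).

Definition in_env_supp (e : env) (a : atom) : Prop :=
  (exists al n, ename e al n = Some a) \/
  (exists s n v, evar e s n = Some v /\ in_supp (mact B s) a v).

Definition upd_var (e : env) (t : sort) (n : nat) (v : M B t) : env :=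
  {| evar := fun s m =>
       match excluded_middle_informative (t = s) with
       | left E => if Nat.eqb n m then Some (eq_rect t (M B) v s E) else evar e s m
       | right _ => evar e s m
       end;
     ename := ename e |}.

Definition upd_name (e : env) (al : NS) (n : nat) (a : atom) : env :=
  {| evar := evar e;
     ename := fun be m => if dec (be = al /\ m = n) then Some a else ename e be m |}.

Fixpoint sem (s : sort) (p : pat s) (e : env) {struct p} : M B s -> Prop :=
  match p in pat s return M B s -> Prop with
  | PVar s n => fun v => evar e s n = Some v
  | PName al n => fun v => ename e al n = Some (proj1_sig v)
  | PAnd p q => fun v => sem _ p e v /\ sem _ q e v
  | PNot p => fun v => ~ sem _ p e v
  | PEx t n p => fun v => exists u : M B t, sem _ p (upd_var e t n u) v
  | PApp sg ps => fun w => exists vs, sems _ ps e vs /\ sym_int Mo sg vs w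
  | @PNew s al n p => fun v =>
      exists a : atom, asort a = al /\ ~ in_env_supp e a /\
        sem _ p (upd_name e al n a) v /\ ~ in_supp (mact B s) a v
  end
with sems (l : list sort) (ps : pats l) (e : env) {struct ps} : tup B l -> Prop :=
  match ps in pats l return tup B l -> Prop with
  | PNil => fun _ => True
  | PCons p ps => fun vs => sem _ p e (fst vs) /\ sems _ ps e (snd vs)
  end.

Definition suitable (e : env) (s : sort) (p : pat s) : Prop :=
  (forall t n, var_free t n _ p -> evar e t n <> None) /\
  (forall al n, name_free al n _ p -> ename e al n <> None).

Definition pequiv (s : sort) (p q : pat s) : Prop :=
  forall e : env, wf_env e -> suitable e s p -> suitable e s q ->
    forall v : M B s, sem s p e v <-> sem s q e v.

End Semantics.

Fixpoint tup_fresh (B : BS -> nomset) (a : atom) (l : list sort) : tup B l -> Prop :=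
  match l return tup B l -> Prop with
  | [] => fun _ => True
  | s :: l => fun vs => ~ in_supp (mact B s) a (fst vs) /\ tup_fresh B a l (snd vs)
  end.

End NML.

Arguments SName {NS BS} al.
Arguments SProd {NS BS} t1 t2.
Arguments SymPair {NS BS Sym} t1 t2.
Arguments SymAbs {NS BS Sym} al t.
Arguments PVar {NS BS Sym arity res} s n.
Arguments PName {NS BS Sym arity res} al n.
Arguments PAnd {NS BS Sym arity res s} _ _.
Arguments PNot {NS BS Sym arity res s} _.
Arguments PEx {NS BS Sym arity res s} t n _.
Arguments PApp {NS BS Sym arity res} sg _.
Arguments PNew {NS BS Sym arity res s} al n _.
Arguments PNil {NS BS Sym arity res}.
Arguments PCons {NS BS Sym arity res s l} _ _.
Arguments POr {NS BS Sym arity res s} p q.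
Arguments map_new {NS BS Sym arity res} al n {l} ps.
Arguments name_free {NS BS Sym arity res} al n {s} p.
Arguments pequiv {NS BS Sym arity res} Mo {s} p q.
Arguments sym_int {NS BS Sym arity res} Mo sg _ _.
Arguments base {NS BS Sym arity res} _ _.
Arguments tup_fresh {NS BS} B a {l} _.
Arguments mact {NS BS} B s _ _.
Arguments in_supp {NS T} act a x.
Arguments supports {NS T} act L x.

(* The denotation of a pattern is equivariant: permuting the atoms of the valuation
   permutes the denotation. A transposition of two atoms that are fresh for the valuation
   and for a value fixes both, so [new a. phi] holds at [v] iff [phi] holds at [v] with [a]
   bound to one, equivalently to every, atom fresh for the valuation and for [v].
   Valuations, values and argument tuples have finite support, so finitely many of them
   always have a common fresh atom; instantiating every [new] at such an atom reduces each
   law to its propositional counterpart. The side conditions are exactly what lets the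
   instantiation pass the outer operator: a name that is not free in [psi] does not affect
   [psi]; in [[a](new b. phi)] the atom bound to [b] differs from that of [a], and for
   [b <> a], [b # [a]x] iff [b # x]; a symbol must not create freshness, which pairing
   satisfies. *)

From Pilot Require Import Defs.
From Stdlib Require Import List Classical ClassicalEpsilon FunctionalExtensionality
  PropExtensionality ProofIrrelevance Arith Lia.
Import ListNotations.

Arguments pf {NS}. Arguments pinv {NS}. Arguments pinvK {NS}. Arguments pfK {NS}.
Arguments psort {NS}. Arguments pfinite {NS}. Arguments asort {NS}.
Arguments swapf {NS}. Arguments pswap {NS}. Arguments cact {NS}. Arguments cT {NS}.
Arguments alpha_class {NS}. Arguments abs_mk {NS}. Arguments abs_act {NS}.

Section Permutations.
Context {NS : Type}.
Implicit Types (p q : perm NS) (a b c d : atom NS).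

Definition perm_inv p : perm NS.
Proof.
  refine {| pf := pinv p; pinv := pf p; pinvK := pfK p; pfK := pinvK p |}.
  - intro a. rewrite <- (psort p (pinv p a)), pfK. reflexivity.
  - destruct (pfinite p) as [L HL]. exists (map (pf p) L). intros a Ha.
    rewrite <- (pfK p a). apply in_map, HL. rewrite pfK. congruence.
Defined.

Definition perm_comp p q : perm NS.
Proof.
  refine {| pf := fun a => pf p (pf q a); pinv := fun a => pinv q (pinv p a) |}.
  - intro a. rewrite !pinvK. reflexivity.
  - intro a. rewrite !pfK. reflexivity.
  - intro a. rewrite !psort. reflexivity.
  - destruct (pfinite p) as [L1 H1], (pfinite q) as [L2 H2].
    exists (L1 ++ L2). intros a Ha. apply in_or_app.
    destruct (classic (pf q a = a)) as [E|E]; [left; apply H1; congruence | right; auto].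
Defined.

Definition perm_id : perm NS.
Proof.
  refine {| pf := fun a => a; pinv := fun a => a |}; try reflexivity.
  exists []. intros a H. congruence.
Defined.

Lemma pf_inj p a b : pf p a = pf p b -> a = b.
Proof. intro E. rewrite <- (pinvK p a), E, pinvK. reflexivity. Qed.

Lemma in_map_pf p a L : In (pf p a) (map (pf p) L) <-> In a L.
Proof.
  split; [|apply in_map].
  intros [x [E Hx]]%in_map_iff. apply pf_inj in E. congruence.
Qed.

Lemma swapf_l a b : swapf a b a = b.
Proof. unfold swapf. rewrite (dec_true (eq_refl a)). reflexivity. Qed.

Lemma swapf_r a b : swapf a b b = a.
Proof.
  unfold swapf. destruct (classic (b = a)) as [E|E].
  - rewrite (dec_true E). congruence.
  - rewrite (dec_false E), (dec_true (eq_refl b)). reflexivity.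
Qed.

Lemma swapf_id a b c : c <> a -> c <> b -> swapf a b c = c.
Proof. intros Ha Hb. unfold swapf. rewrite (dec_false Ha), (dec_false Hb). reflexivity. Qed.

Lemma swapf_aa a d : swapf a a d = d.
Proof. destruct (classic (d = a)) as [->|]; [apply swapf_l | apply swapf_id; auto]. Qed.

Lemma swapf_conj p a b d : pf p (swapf a b d) = swapf (pf p a) (pf p b) (pf p d).
Proof.
  destruct (classic (d = a)) as [->|Ea]; [rewrite !swapf_l; reflexivity|].
  destruct (classic (d = b)) as [->|Eb]; [rewrite !swapf_r; reflexivity|].
  rewrite !swapf_id; auto; intro E; apply pf_inj in E; contradiction.
Qed.

Lemma swapf_through a b c d : a <> b -> c <> a -> c <> b ->
  swapf a b d = swapf a c (swapf b c (swapf a c d)).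
Proof.
  intros ab ca cb.
  destruct (classic (d = a)) as [->|da].
  { rewrite swapf_l, swapf_l, swapf_r, swapf_id; congruence. }
  destruct (classic (d = b)) as [->|db].
  { rewrite (swapf_id a c b), swapf_l, swapf_r, swapf_r; congruence. }
  destruct (classic (d = c)) as [->|dc].
  { rewrite swapf_r, (swapf_id b c a), swapf_l, swapf_id; congruence. }
  rewrite (swapf_id a c d), (swapf_id b c d), (swapf_id a c d), (swapf_id a b d); congruence.
Qed.

End Permutations.

Section Atoms.
Context {NS : Type}.

Lemma fresh_atom (al : NS) (L : list (atom NS)) : exists c, asort c = al /\ ~ In c L.
Proof.
  assert (exists k, forall x, In x L -> snd x < k) as [k Hk].
  { induction L as [|x L [k IH]]; [exists 0; intros x []|].
    exists (S (max k (snd x))). intros y [<-|Hy]; [|specialize (IH y Hy)]; lia. }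
  exists (al, k). split; [reflexivity|]. intros H%Hk. simpl in H. lia.
Qed.

Definition cofinite (P : atom NS -> Prop) : Prop := exists L, forall c, ~ In c L -> P c.

Lemma cofinite_notin L : cofinite (fun c => ~ In c L).
Proof. exists L. auto. Qed.

Lemma cofinite_and {P Q : atom NS -> Prop} :
  cofinite P -> cofinite Q -> cofinite (fun c => P c /\ Q c).
Proof.
  intros [L1 H1] [L2 H2]. exists (L1 ++ L2).
  intros c N. split; [apply H1 | apply H2]; intro; apply N, in_or_app; auto.
Qed.

Lemma cofinite_mono {P Q : atom NS -> Prop} :
  cofinite P -> (forall c, P c -> Q c) -> cofinite Q.
Proof. intros [L HL] PQ. exists L. auto. Qed.

Lemma cofinite_forall_in {X : Type} (L : list X) (P : X -> atom NS -> Prop) :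
  (forall x, In x L -> cofinite (P x)) -> cofinite (fun c => forall x, In x L -> P x c).
Proof.
  induction L as [|x L IH]; intro H; [exists []; intros c _ y []|].
  apply (cofinite_mono (cofinite_and (H x (or_introl eq_refl))
                          (IH (fun y Hy => H y (or_intror Hy))))).
  intros c [Hx HL] y [<-|Hy]; auto.
Qed.

Lemma cofinite_exists {P : atom NS -> Prop} (al : NS) :
  cofinite P -> exists c, asort c = al /\ P c.
Proof. intros [L HL]. destruct (fresh_atom al L) as [c [Hc N]]. exists c. auto. Qed.

Lemma supports_notin_supp {T} (act : perm NS -> T -> T) L x c :
  supports act L x -> ~ In c L -> ~ in_supp act c x.
Proof. intros HL N I. exact (N (I L HL)). Qed.

Lemma cofinite_fresh {T} {act : perm NS -> T -> T} {x} :
  (exists L, supports act L x) -> cofinite (fun c => ~ in_supp act c x).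
Proof. intros [L HL]. exists L. intro c. apply (supports_notin_supp act), HL. Qed.

Lemma notin_supp_supports {T} {act : perm NS -> T -> T} {a x} :
  ~ in_supp act a x -> exists L, supports act L x /\ ~ In a L.
Proof.
  intros H. apply not_all_ex_not in H as [L H].
  apply imply_to_and in H. exists L. exact H.
Qed.

End Atoms.

Definition is_action {NS : Type} (C : carrier NS) : Prop :=
  (forall p x, (forall a, pf p a = a) -> cact C p x = x) /\
  (forall p q r x, (forall a, pf r a = pf p (pf q a)) ->
     cact C r x = cact C p (cact C q x)).

Section Actions.
Context {NS : Type} (C : carrier NS) (HC : is_action C).
Implicit Types (p q : perm NS) (a b c d : atom NS) (x y : cT C).

Lemma act_id p x : (forall a, pf p a = a) -> cact C p x = x.
Proof. apply HC. Qed.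

Lemma act_comp p q r x : (forall a, pf r a = pf p (pf q a)) ->
  cact C r x = cact C p (cact C q x).
Proof. apply HC. Qed.

Lemma act_ext p q x : (forall a, pf p a = pf q a) -> cact C p x = cact C q x.
Proof.
  intro H. rewrite (act_comp q perm_id p x) by apply H.
  rewrite (act_id perm_id x) by reflexivity. reflexivity.
Qed.

Lemma act_invK p x : cact C (perm_inv p) (cact C p x) = x.
Proof.
  rewrite <- (act_comp (perm_inv p) p perm_id) by (intro; apply eq_sym, pinvK).
  apply act_id. reflexivity.
Qed.

Lemma act_Kinv p x : cact C p (cact C (perm_inv p) x) = x.
Proof.
  rewrite <- (act_comp p (perm_inv p) perm_id) by (intro; apply eq_sym, pfK).
  apply act_id. reflexivity.
Qed.

Lemma act_inj p x y : cact C p x = cact C p y <-> x = y.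
Proof.
  split; [|intros ->; reflexivity].
  intro E. rewrite <- (act_invK p x), E, act_invK. reflexivity.
Qed.

Lemma supports_act p L x :
  supports (cact C) L x -> supports (cact C) (map (pf p) L) (cact C p x).
Proof.
  intros HL r Hr.
  (* r (p x) = p ((p^-1 r p) x), and p^-1 r p fixes L *)
  assert (E : cact C (perm_comp (perm_inv p) (perm_comp r p)) x = x).
  { apply HL. intros l Hl. simpl. rewrite Hr by apply in_map, Hl. apply pinvK. }
  rewrite <- (act_comp r p (perm_comp r p)) by reflexivity.
  rewrite <- E at 2. apply act_comp. intro a. simpl. rewrite pfK. reflexivity.
Qed.

Lemma in_supp_act p a x : in_supp (cact C) (pf p a) (cact C p x) <-> in_supp (cact C) a x.
Proof.
  split; intros H L HL.
  - apply (in_map_pf p), H, supports_act, HL.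
  - apply (supports_act (perm_inv p)) in HL. rewrite act_invK in HL.
    apply H, in_map_iff in HL as [l [E Hl]]. simpl in E. rewrite <- E, pfK. exact Hl.
Qed.

Lemma swap_act p a b (H : asort a = asort b) (H' : asort (pf p a) = asort (pf p b)) x :
  cact C (pswap (pf p a) (pf p b) H') (cact C p x) = cact C p (cact C (pswap a b H) x).
Proof.
  rewrite <- (act_comp _ p (perm_comp (pswap _ _ H') p)) by reflexivity.
  rewrite <- (act_comp p (pswap a b H) (perm_comp p (pswap a b H))) by reflexivity.
  apply act_ext. intro d. symmetry. apply swapf_conj.
Qed.

Lemma swap_fresh_fix a b (H : asort a = asort b) x :
  ~ in_supp (cact C) a x -> ~ in_supp (cact C) b x -> cact C (pswap a b H) x = x.
Proof.
  intros Ha Hb. destruct (classic (a = b)) as [<-|ab].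
  { apply act_id. intro d. apply swapf_aa. }
  destruct (notin_supp_supports Ha) as [L1 [S1 N1]].
  destruct (notin_supp_supports Hb) as [L2 [S2 N2]].
  destruct (fresh_atom (asort a) (a :: b :: L1 ++ L2)) as [c [Hc Nc]].
  assert (Hac : asort a = asort c) by congruence.
  assert (Hbc : asort b = asort c) by congruence.
  (* with c fresh, (a b) = (a c) (b c) (a c), and (a c), (b c) fix x *)
  assert (Fix : forall d (Hd : asort d = asort c) L,
             supports (cact C) L x -> ~ In d L -> ~ In c L -> cact C (pswap d c Hd) x = x).
  { intros d Hd L HL Nd NcL. apply HL. intros l Hl. apply swapf_id; intros ->; contradiction. }
  rewrite (act_comp (pswap a c Hac) (perm_comp (pswap b c Hbc) (pswap a c Hac))).
  - rewrite (act_comp (pswap b c Hbc) (pswap a c Hac) (perm_comp _ _)) by reflexivity.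
    rewrite (Fix a Hac L1), (Fix b Hbc L2), (Fix a Hac L1); auto;
      intro; apply Nc; right; right; apply in_or_app; auto.
  - intro d. apply swapf_through; auto; intros ->; apply Nc; simpl; auto.
Qed.

Lemma fresh_of_swap_fixed b d (H : asort b = asort d) x :
  ~ in_supp (cact C) d x -> cact C (pswap b d H) x = x -> ~ in_supp (cact C) b x.
Proof.
  intros Hd E. destruct (notin_supp_supports Hd) as [L [HL N]].
  pose proof (supports_act (pswap b d H) L x HL) as S. rewrite E in S.
  apply (supports_notin_supp _ _ _ _ S).
  intro I. apply N, (in_map_pf (pswap b d H)).
  change (In (swapf b d d) (map (pf (pswap b d H)) L)). rewrite swapf_r. exact I.
Qed.

End Actions.

Section Abstraction.
Context {NS : Type} (C : carrier NS) (HC : is_action C) (al : NS).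
Implicit Types (p : perm NS) (a b : atom NS) (x y z : cT C).

Lemma alpha_class_act p a x b z :
  alpha_class C a x (b, z) -> alpha_class C (pf p a) (cact C p x) (pf p b, cact C p z).
Proof.
  intros [[E1 E2] | [Hs [Hn Ez]]]; simpl in *; [left; subst; auto | right].
  assert (Hs' : asort (pf p b) = asort (pf p a)) by (rewrite !psort; exact Hs).
  exists Hs'. simpl. rewrite (in_supp_act C HC). split; [exact Hn|].
  rewrite Ez. symmetry. apply (swap_act C HC).
Qed.

Lemma alpha_class_actE p a x :
  alpha_class C (pf p a) (cact C p x) =
  fun bz => alpha_class C a x (pinv p (fst bz), cact C (perm_inv p) (snd bz)).
Proof.
  apply functional_extensionality. intros [b z]. apply propositional_extensionality.
  split; intro H.
  - apply (alpha_class_act (perm_inv p)) in H. simpl in H.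
    rewrite pinvK, (act_invK C HC) in H. exact H.
  - apply (alpha_class_act p) in H. simpl in H.
    rewrite pfK, (act_Kinv C HC) in H. exact H.
Qed.

Lemma abs_mk_eq a Ha x a' Ha' x' :
  alpha_class C a x = alpha_class C a' x' -> abs_mk al C a Ha x = abs_mk al C a' Ha' x'.
Proof. intro E. apply subset_eq_compat. exact E. Qed.

Lemma abs_mk_surj (S : absT NS al C) : exists a Ha x, S = abs_mk al C a Ha x.
Proof.
  destruct S as [P [a [x [Ha E]]]]. exists a, Ha, x. apply subset_eq_compat. exact E.
Qed.

Lemma abs_act_mk p a Ha x H' :
  abs_act al C p (abs_mk al C a Ha x) = abs_mk al C (pf p a) H' (cact C p x).
Proof.
  unfold abs_act.
  destruct (constructive_indefinite_description _ _) as [a' Ha'].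
  destruct (constructive_indefinite_description _ _) as [x' [Hs Heq]].
  apply abs_mk_eq. simpl in Heq. rewrite !alpha_class_actE, Heq. reflexivity.
Qed.

Lemma abs_mk_inj a Ha x a' Ha' y :
  abs_mk al C a Ha x = abs_mk al C a' Ha' y -> a = a' -> x = y.
Proof.
  intros E <-. apply (f_equal (@proj1_sig _ _)) in E. simpl in E.
  assert (A : alpha_class C a y (a, x)) by (rewrite <- E; left; auto).
  destruct A as [[_ E'] | [Haa [_ E']]]; simpl in E'; rewrite E'; [reflexivity|].
  apply (act_id C HC). intro d. apply swapf_aa.
Qed.

Lemma abs_is_action : is_action (abs_carrier NS al C).
Proof.
  split.
  - intros p S Hp. destruct (abs_mk_surj S) as [a [Ha [x ->]]]. simpl.
    rewrite (abs_act_mk p a Ha x (eq_trans (psort p a) Ha)).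
    apply abs_mk_eq. rewrite Hp, (act_id C HC p x Hp). reflexivity.
  - intros p q r S Hr. destruct (abs_mk_surj S) as [a [Ha [x ->]]]. simpl.
    rewrite (abs_act_mk r a Ha x (eq_trans (psort r a) Ha)),
      (abs_act_mk q a Ha x (eq_trans (psort q a) Ha)),
      (abs_act_mk p _ _ _ (eq_trans (psort p _) (eq_trans (psort q a) Ha))).
    apply abs_mk_eq. rewrite Hr, (act_comp C HC p q r x Hr). reflexivity.
Qed.

Lemma abs_supports a Ha x L :
  supports (cact C) L x -> supports (abs_act al C) (a :: L) (abs_mk al C a Ha x).
Proof.
  intros HL p Hp. rewrite (abs_act_mk p a Ha x (eq_trans (psort p a) Ha)).
  apply abs_mk_eq. rewrite (Hp a (or_introl eq_refl)), (HL p (fun l Hl => Hp l (or_intror Hl))).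
  reflexivity.
Qed.

Lemma fresh_abs a Ha x b : b <> a -> (exists L, supports (cact C) L x) ->
  ~ in_supp (abs_act al C) b (abs_mk al C a Ha x) <-> ~ in_supp (cact C) b x.
Proof.
  intros ba Fx. split; intro Hb.
  - assert (Fabs : exists L, supports (abs_act al C) L (abs_mk al C a Ha x))
      by (destruct Fx as [L HL]; exists (a :: L); apply abs_supports, HL).
    destruct (cofinite_exists (asort b)
                (cofinite_and (cofinite_fresh Fx)
                   (cofinite_and (cofinite_fresh Fabs) (cofinite_notin [a; b]))))
      as [d [Hd [dx [dabs dab]]]].
    assert (Hbd : asort b = asort d) by congruence.
    apply (fresh_of_swap_fixed C HC b d Hbd x dx).
    (* (b d) fixes [a]x, hence also x, as it fixes a *)
    pose proof (swap_fresh_fix _ abs_is_action b d Hbd _ Hb dabs) as E. simpl in E.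
    rewrite (abs_act_mk _ a Ha x (eq_trans (psort (pswap b d Hbd) a) Ha)) in E.
    apply (abs_mk_inj _ _ _ _ _ _ E). apply swapf_id; intros ->; simpl in dab; tauto.
  - destruct (notin_supp_supports Hb) as [L [HL N]].
    apply (supports_notin_supp _ (a :: L)); [apply abs_supports, HL|].
    intros [->|I]; [apply ba|apply N]; auto.
Qed.

End Abstraction.

Section Carriers.
Context {NS BS : Type} (B : BS -> nomset NS).

Lemma carr_action s : is_action (carr NS BS B s).
Proof.
  induction s as [al|b| |al s IH|s1 IH1 s2 IH2].
  - split; intros; destruct x as [a Ha]; apply subset_eq_compat; simpl; auto.
  - split; intros; simpl; [apply nact_id | apply nact_comp]; auto.
  - split; reflexivity.
  - apply abs_is_action, IH.
  - split.
    + intros p [x y] Hp. simpl. rewrite (act_id _ IH1), (act_id _ IH2); auto.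
    + intros p q r [x y] Hr. simpl. rewrite (act_comp _ IH1 p q r), (act_comp _ IH2 p q r); auto.
Qed.

Lemma carr_finsupp s (x : cT (carr NS BS B s)) : exists L, supports (cact (carr NS BS B s)) L x.
Proof.
  induction s as [al|b| |al s IH|s1 IH1 s2 IH2].
  - destruct x as [a Ha]. exists [a]. intros p Hp.
    apply subset_eq_compat. apply Hp. left; reflexivity.
  - apply nfin.
  - exists []. intros p _. reflexivity.
  - destruct (abs_mk_surj _ _ x) as [a [Ha [y ->]]]. destruct (IH y) as [L HL].
    exists (a :: L). apply abs_supports, HL. apply carr_action.
  - destruct x as [x y], (IH1 x) as [L1 H1], (IH2 y) as [L2 H2].
    exists (L1 ++ L2). intros p Hp. simpl.
    rewrite H1, H2; auto; intros; apply Hp, in_or_app; auto.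
Qed.

End Carriers.

Section Semantics.
Context {NS BS Sym : Type} {arity : Sym -> list (sort NS BS)} {res : Sym -> sort NS BS}
  (Mo : std_model NS BS Sym arity res).
Local Notation B := (base Mo).
Local Notation pat := (pat NS BS Sym arity res).
Local Notation pats := (pats NS BS Sym arity res).
Local Notation env := (env NS BS Sym arity res Mo).
Local Notation sem := (sem NS BS Sym arity res Mo).
Local Notation sems := (sems NS BS Sym arity res Mo).
Local Notation evar := (evar NS BS Sym arity res Mo).
Local Notation ename := (ename NS BS Sym arity res Mo).
Local Notation upd_name := (upd_name NS BS Sym arity res Mo).
Local Notation upd_var := (upd_var NS BS Sym arity res Mo).
Local Notation in_env_supp := (in_env_supp NS BS Sym arity res Mo).
Local Notation wf_env := (wf_env NS BS Sym arity res Mo).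

Lemma sym_int_act sg p vs w :
  sym_int Mo sg (tact NS BS B _ p vs) (mact B _ p w) <-> sym_int Mo sg vs w.
Proof.
  unfold mact. destruct sg as [f|t1 t2|al t|al t|al t|al t].
  - apply usym_equiv.
  - destruct vs as [x [y u]], w as [w1 w2]. cbn.
    split; intro E; injection E as E1 E2; [|subst; reflexivity].
    apply (act_inj _ (carr_action B t1)) in E1.
    apply (act_inj _ (carr_action B t2)) in E2. subst; reflexivity.
  - destruct vs as [a [x u]]. cbn [sym_int sym_arity tact fst snd sym_res].
    unfold mact. cbn [carr cact name_act proj1_sig].
    rewrite <- (abs_act_mk _ (carr_action B t) al p _ (proj2_sig a)).
    apply (act_inj (carr NS BS B (SAbs NS BS al t)) (carr_action B _)).
  - destruct vs as [a [b [x u]]]. cbn [sym_int sym_arity tact fst snd sym_res].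
    unfold mact, sort_eq2.
    rewrite (swap_act _ (carr_action B t) p _ _ (eq_trans (proj2_sig a) (eq_sym (proj2_sig b)))).
    apply (act_inj _ (carr_action B t)).
  - destruct vs as [S [a u]]. cbn [sym_int sym_arity tact fst snd sym_res].
    destruct (abs_mk_surj (carr NS BS B t) al S) as [a0 [Ha0 [x0 ->]]].
    unfold mact. cbn [carr cact abs_carrier name_act proj1_sig].
    rewrite (abs_act_mk _ (carr_action B t) al p a0 Ha0 x0 (eq_trans (psort p a0) Ha0)).
    cbn [abs_mk proj1_sig]. rewrite (alpha_class_actE _ (carr_action B t)). cbn [fst snd].
    rewrite pinvK, (act_invK _ (carr_action B t)). reflexivity.
  - destruct vs as [a [x u]]. cbn [sym_int sym_arity tact fst snd].
    unfold mact. cbn [carr cact name_act proj1_sig].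
    rewrite (in_supp_act _ (carr_action B t)). reflexivity.
Qed.

Definition is_env_act (p : perm NS) (e e' : env) : Prop :=
  (forall al n, ename e' al n = option_map (pf p) (ename e al n)) /\
  (forall s n, evar e' s n = option_map (mact B s p) (evar e s n)).

Lemma is_env_act_inv p e e' : is_env_act p e e' -> is_env_act (perm_inv p) e' e.
Proof.
  intros [R1 R2]. split.
  - intros al n. rewrite R1. destruct (ename e al n); simpl; [rewrite pinvK|]; reflexivity.
  - intros s n. rewrite R2. destruct (evar e s n); simpl; [|reflexivity].
    unfold mact. rewrite (act_invK _ (carr_action B s)). reflexivity.
Qed.

Lemma is_env_act_upd_name p e e' al n a :
  is_env_act p e e' -> is_env_act p (upd_name e al n a) (upd_name e' al n (pf p a)).
Proof.
  intros [R1 R2]. split; [|apply R2].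
  intros be m. simpl. destruct (dec _); [reflexivity | apply R1].
Qed.

Lemma is_env_act_upd_var p e e' t n u :
  is_env_act p e e' -> is_env_act p (upd_var e t n u) (upd_var e' t n (mact B t p u)).
Proof.
  intros [R1 R2]. split; [apply R1|].
  intros s m. simpl. destruct (excluded_middle_informative (t = s)) as [<-|]; [|apply R2].
  destruct (Nat.eqb n m); [reflexivity | apply R2].
Qed.

Lemma is_env_act_fresh p e e' a :
  is_env_act p e e' -> ~ in_env_supp e a -> ~ in_env_supp e' (pf p a).
Proof.
  intros [R1 R2] N [[al [n Hn]] | [s [n [v [Hv Hs]]]]]; apply N.
  - rewrite R1 in Hn. destruct (ename e al n) as [c|] eqn:E; simpl in Hn; [|discriminate].
    injection Hn as Hn%pf_inj. left. exists al, n. congruence.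
  - rewrite R2 in Hv. destruct (evar e s n) as [u|] eqn:E; simpl in Hv; [|discriminate].
    injection Hv as <-. right. exists s, n, u. split; [exact E|].
    unfold mact in Hs. apply (in_supp_act _ (carr_action B s)) in Hs. exact Hs.
Qed.

Scheme pat_ind2 := Induction for Defs.pat Sort Prop
  with pats_ind2 := Induction for Defs.pats Sort Prop.
Combined Scheme pat_pats_ind from pat_ind2, pats_ind2.

Lemma sem_act_sems_act :
  (forall s (q : pat s) p e e' v,
     is_env_act p e e' -> sem s q e v -> sem s q e' (mact B s p v)) /\
  (forall l (ps : pats l) p e e' vs,
     is_env_act p e e' -> sems l ps e vs -> sems l ps e' (tact NS BS B l p vs)).
Proof.
  apply pat_pats_ind; simpl.
  - intros s n p e e' v R H. rewrite (proj2 R), H. reflexivity.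
  - intros al n p e e' v R H. rewrite (proj1 R), H. reflexivity.
  - intros s q1 IH1 q2 IH2 p e e' v R [H1 H2]. split; eauto.
  - intros s q IH p e e' v R H H'. apply H.
    apply (IH (perm_inv p) e' e _ (is_env_act_inv _ _ _ R)) in H'.
    unfold mact in H'. rewrite (act_invK _ (carr_action B s)) in H'. exact H'.
  - intros s t n q IH p e e' v R [u H]. exists (mact B t p u).
    exact (IH p _ _ v (is_env_act_upd_var _ _ _ _ _ _ R) H).
  - intros sg ps IH p e e' v R [vs [H1 H2]]. exists (tact NS BS B _ p vs).
    split; [exact (IH p e e' vs R H1) | apply sym_int_act, H2].
  - intros s al n q IH p e e' v R [a [Ha [N [H Hs]]]].
    exists (pf p a). split; [rewrite psort; exact Ha|].
    split; [exact (is_env_act_fresh _ _ _ _ R N)|]. split.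
    + exact (IH p _ _ v (is_env_act_upd_name _ _ _ _ _ _ R) H).
    + unfold mact. rewrite (in_supp_act _ (carr_action B s)). exact Hs.
  - intros. exact I.
  - intros s l q IH ps IHs p e e' [v vs] R [H1 H2]. split; eauto.
Qed.

Lemma cofinite_fresh_elem s (v : M NS BS B s) : cofinite (fun c => ~ in_supp (mact B s) c v).
Proof. apply cofinite_fresh, carr_finsupp. Qed.

Definition env_finsupp (e : env) : Prop := cofinite (fun c => ~ in_env_supp e c).

Lemma wf_env_finsupp e : wf_env e -> env_finsupp e.
Proof.
  intros [[LV HV] [[LN HN] _]].
  assert (Fn : cofinite (fun c => forall x, In x LN -> ename e (fst x) (snd x) <> Some c)).
  { apply cofinite_forall_in. intros [al n] _. simpl.
    destruct (ename e al n) as [a|]; [|exists []; intros; discriminate].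
    apply (cofinite_mono (cofinite_notin [a])).
    intros c N E. injection E as ->. apply N. left. reflexivity. }
  assert (Fv : cofinite (fun c => forall x, In x LV -> forall v,
                 evar e (fst x) (snd x) = Some v -> ~ in_supp (mact B (fst x)) c v)).
  { apply cofinite_forall_in. intros [s n] _. simpl.
    destruct (evar e s n) as [v|]; [|exists []; intros; discriminate].
    apply (cofinite_mono (cofinite_fresh_elem s v)).
    intros c N v' E. injection E as <-. exact N. }
  apply (cofinite_mono (cofinite_and Fn Fv)).
  intros c [Nn Nv] [[al [n E]] | [s [n [v [E I]]]]].
  - apply (Nn (al, n)); [apply HN | exact E]. congruence.
  - apply (Nv (s, n)) with v; [apply HV | exact E | exact I]. congruence.
Qed.

Lemma env_finsupp_upd_name e al n a : env_finsupp e -> env_finsupp (upd_name e al n a).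
Proof.
  intro Fe. apply (cofinite_mono (cofinite_and (cofinite_notin [a]) Fe)).
  intros c [Na Ne] [[be [m E]] | [s [m [v [E I]]]]]; simpl in E.
  - destruct (dec _); [injection E as ->; apply Na; left; reflexivity|].
    apply Ne. left. exists be, m. exact E.
  - apply Ne. right. exists s, m, v. auto.
Qed.

Lemma env_finsupp_upd_var e t n u : env_finsupp e -> env_finsupp (upd_var e t n u).
Proof.
  intro Fe. apply (cofinite_mono (cofinite_and (cofinite_fresh_elem t u) Fe)).
  intros c [Nu Ne] [[be [m E]] | [s [m [v [E I]]]]]; simpl in E.
  - apply Ne. left. exists be, m. exact E.
  - destruct (excluded_middle_informative (t = s)) as [<-|].
    + destruct (Nat.eqb n m); [injection E as <-; contradiction|].
      apply Ne. right. exists t, m, v. auto.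
    + apply Ne. right. exists s, m, v. auto.
Qed.

Lemma exists_fresh_name e al (P : atom NS -> Prop) :
  env_finsupp e -> cofinite P -> exists c, asort c = al /\ ~ in_env_supp e c /\ P c.
Proof. intros Fe FP. exact (cofinite_exists al (cofinite_and Fe FP)). Qed.

(* Equivariance under the swap (a b), which fixes [e] and [v]. *)
Lemma sem_rename_fresh s (q : pat s) e al n a b v :
  asort a = al -> asort b = al -> ~ in_env_supp e a -> ~ in_env_supp e b ->
  ~ in_supp (mact B s) a v -> ~ in_supp (mact B s) b v ->
  sem s q (upd_name e al n a) v -> sem s q (upd_name e al n b) v.
Proof.
  intros Ha Hb Na Nb Sa Sb Hq.
  assert (H : asort a = asort b) by congruence.
  assert (R : is_env_act (pswap a b H) (upd_name e al n a) (upd_name e al n b)).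
  { split.
    - intros be m. simpl. destruct (dec _); simpl; [rewrite swapf_l; reflexivity|].
      destruct (ename e be m) as [c|] eqn:E; simpl; [|reflexivity].
      rewrite swapf_id; [reflexivity| |]; intros ->;
        [apply Na | apply Nb]; left; exists be, m; exact E.
    - intros s' m. simpl. destruct (evar e s' m) as [u|] eqn:E; simpl; [|reflexivity].
      f_equal. symmetry. apply (swap_fresh_fix _ (carr_action B s')); intro I;
        [apply Na | apply Nb]; right; exists s', m, u; split; assumption. }
  apply (proj1 sem_act_sems_act _ q _ _ _ v R) in Hq.
  unfold mact in Hq. rewrite (swap_fresh_fix _ (carr_action B s)) in Hq; assumption.
Qed.

Lemma sem_new_fresh s (p : pat s) e al n c v :
  asort c = al -> ~ in_env_supp e c -> ~ in_supp (mact B s) c v ->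
  sem s (PNew al n p) e v <-> sem s p (upd_name e al n c) v.
Proof.
  intros Hc Nc Sc. split; [|intro H; exists c; auto].
  intros [a [Ha [Na [Hp Sa]]]]. exact (sem_rename_fresh s p e al n a c v Ha Hc Na Nc Sa Sc Hp).
Qed.

Lemma sem_new_at_fresh s e al n v : env_finsupp e ->
  exists c, forall r : pat s, sem s (PNew al n r) e v <-> sem s r (upd_name e al n c) v.
Proof.
  intro Fe.
  destruct (exists_fresh_name e al _ Fe (cofinite_fresh_elem s v)) as [c [Hc [Nc Sc]]].
  exists c. intro r. exact (sem_new_fresh s r e al n c v Hc Nc Sc).
Qed.

Definition agree_on s (q : pat s) (e e' : env) : Prop :=
  (forall t n, var_free NS BS Sym arity res t n s q -> evar e t n = evar e' t n) /\
  (forall al n, name_free al n q -> ename e al n = ename e' al n).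

Definition agree_on_pats l (ps : pats l) (e e' : env) : Prop :=
  (forall t n, vars_free NS BS Sym arity res t n l ps -> evar e t n = evar e' t n) /\
  (forall al n, names_free NS BS Sym arity res al n l ps -> ename e al n = ename e' al n).

Lemma agree_on_sym s (q : pat s) e e' : agree_on s q e e' -> agree_on s q e' e.
Proof. intros [A1 A2]. split; intros; symmetry; auto. Qed.

Lemma agree_on_upd_name s (q : pat s) e al n a :
  ~ name_free al n q -> agree_on s q e (upd_name e al n a).
Proof.
  intro NF. split; [reflexivity|]. intros be m Hf. simpl.
  destruct (classic (be = al /\ m = n)) as [[-> ->]|P]; [contradiction|].
  rewrite (dec_false P). reflexivity.
Qed.

Lemma sem_agree_sems_agree :
  (forall s (q : pat s) e e' v, env_finsupp e -> env_finsupp e' ->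
     agree_on s q e e' -> sem s q e v -> sem s q e' v) /\
  (forall l (ps : pats l) e e' vs, env_finsupp e -> env_finsupp e' ->
     agree_on_pats l ps e e' -> sems l ps e vs -> sems l ps e' vs).
Proof.
  apply pat_pats_ind; simpl.
  - intros s n e e' v _ _ A H. rewrite <- (proj1 A s n (conj eq_refl eq_refl)). exact H.
  - intros al n e e' v _ _ A H. rewrite <- (proj2 A al n (conj eq_refl eq_refl)). exact H.
  - intros s q1 IH1 q2 IH2 e e' v F F' A [H1 H2].
    split; [apply (IH1 e) | apply (IH2 e)]; auto; split; intros; apply A; simpl; auto.
  - intros s q IH e e' v F F' A H H'. apply H, (IH e' e v F' F); [|exact H'].
    split; intros; symmetry; apply A; simpl; auto.
  - intros s t n q IH e e' v F F' A [u H]. exists u.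
    apply (IH (upd_var e t n u)); auto using env_finsupp_upd_var. split.
    + intros t' n' Hf. simpl.
      destruct (excluded_middle_informative (t = t')) as [<-|E].
      * destruct (Nat.eqb n n') eqn:En; [reflexivity|].
        apply (proj1 A). split; [|exact Hf]. intros [_ ->]. apply Nat.eqb_neq in En. auto.
      * apply (proj1 A). split; [|exact Hf]. intros [-> _]. auto.
    + intros al m Hf. apply (proj2 A). exact Hf.
  - intros sg ps IH e e' v F F' A [vs [H1 H2]]. exists vs. split; [|exact H2].
    exact (IH e e' vs F F' A H1).
  - intros s be m q IH e e' v F F' A [a [Ha [N [H Hs]]]].
    destruct (exists_fresh_name e be _ F (cofinite_and F' (cofinite_fresh_elem s v)))
      as [c [Hc [N1 [N2 N3]]]].
    exists c. split; [exact Hc|]. split; [exact N2|]. split; [|exact N3].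
    apply (IH (upd_name e be m c)); auto using env_finsupp_upd_name.
    + split; [intros t n Hf; apply (proj1 A), Hf|].
      intros al n Hf. simpl.
      destruct (classic (al = be /\ n = m)) as [P|P]; [rewrite (dec_true P); reflexivity|].
      rewrite (dec_false P). apply (proj2 A). split; [|exact Hf].
      intros [-> ->]. apply P. auto.
    + exact (sem_rename_fresh s q e be m a c v Ha Hc N N1 Hs N3 H).
  - intros. exact I.
  - intros s l q IH ps IHs e e' vs F F' A [H1 H2].
    split; [apply (IH e) | apply (IHs e)]; auto; split; intros; apply A; simpl; auto.
Qed.

Lemma sem_new_vacuous s (q : pat s) e al n v :
  env_finsupp e -> ~ name_free al n q -> sem s (PNew al n q) e v <-> sem s q e v.
Proof.
  intros Fe NF. destruct (sem_new_at_fresh s e al n v Fe) as [c F]. rewrite F.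
  pose proof (agree_on_upd_name s q e al n c NF) as A.
  split; apply (proj1 sem_agree_sems_agree); auto using env_finsupp_upd_name, agree_on_sym.
Qed.

Lemma sem_new_and s (p q : pat s) e al n v : env_finsupp e ->
  sem s (PAnd (PNew al n p) (PNew al n q)) e v <-> sem s (PNew al n (PAnd p q)) e v.
Proof.
  intro Fe. destruct (sem_new_at_fresh s e al n v Fe) as [c F].
  split; [intros [Hp Hq]; apply F | intros [Hp Hq]%F]; split; apply F; assumption.
Qed.

Lemma sem_new_and_nonfree s (p q : pat s) e al n v : env_finsupp e -> ~ name_free al n q ->
  sem s (PNew al n (PAnd p q)) e v <-> sem s (PAnd (PNew al n p) q) e v.
Proof.
  intros Fe NF. rewrite <- (sem_new_and s p q e al n v Fe).
  pose proof (sem_new_vacuous s q e al n v Fe NF) as V.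
  split; intros [Hp Hq]; split; [exact Hp | apply V, Hq | exact Hp | apply V, Hq].
Qed.

Lemma sem_new_or s (p q : pat s) e al n v : env_finsupp e ->
  sem s (POr (PNew al n p) (PNew al n q)) e v <-> sem s (PNew al n (POr p q)) e v.
Proof.
  intro Fe. destruct (sem_new_at_fresh s e al n v Fe) as [c F].
  split; [intro H; apply F | intros H%F]; intros [Np Nq];
    apply H; split; intro H'; [apply Np | apply Nq | apply Np | apply Nq]; apply F, H'.
Qed.

Lemma sem_new_not s (p : pat s) e al n v : env_finsupp e ->
  sem s (PNot (PNew al n p)) e v <-> sem s (PNew al n (PNot p)) e v.
Proof.
  intro Fe. destruct (sem_new_at_fresh s e al n v Fe) as [c F].
  split; [intro H; apply F | intros H%F]; intro H'; apply H, F, H'.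
Qed.

Lemma sem_abs_new al n m t (p : pat t) e w : n <> m ->
  sem _ (PApp (SymAbs al t) (PCons (PName al n) (PCons (PNew al m p) PNil))) e w <->
  sem _ (PNew al m (PApp (SymAbs al t) (PCons (PName al n) (PCons p PNil)))) e w.
Proof.
  intros Hnm. simpl.
  assert (D : ~ (al = al /\ n = m)) by (intros [_ E]; auto). rewrite (dec_false D).
  assert (fresh_ne : forall c a, ename e al n = Some c -> ~ in_env_supp e a -> a <> c)
    by (intros c a Hc Na ->; apply Na; left; exists al, n; exact Hc).
  split.
  - intros [[c [x u]] [[Hc [[a [Ha [Na [Hp Sa]]]] _]] ->]]. simpl in *.
    exists a. split; [exact Ha|]. split; [exact Na|]. split.
    + exists (c, (x, u)). simpl. auto.
    + apply (fresh_abs _ (carr_action B t)); auto using carr_finsupp.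
  - intros [a [Ha [Na [[[c [x u]] [[Hc [Hp _]] ->]] Sa]]]]. simpl in *.
    exists (c, (x, u)). simpl. split; [|reflexivity]. split; [exact Hc|]. split; [|exact I].
    exists a. split; [exact Ha|]. split; [exact Na|]. split; [exact Hp|].
    apply (fresh_abs _ (carr_action B t) al (proj1_sig c) (proj2_sig c)) in Sa;
      auto using carr_finsupp.
Qed.

Lemma cofinite_tup_fresh l (vs : tup NS BS B l) : cofinite (fun c => tup_fresh B c vs).
Proof.
  induction l as [|s l IH]; [exists []; intros; exact I|].
  destruct vs as [v vs]. exact (cofinite_and (cofinite_fresh_elem s v) (IH vs)).
Qed.

Lemma sems_map_new_fresh l (ps : pats l) e al n c vs :
  asort c = al -> ~ in_env_supp e c -> tup_fresh B c vs ->
  sems l (map_new al n ps) e vs <-> sems l ps (upd_name e al n c) vs.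
Proof.
  intros Hc Nc. revert vs. induction ps as [|s l p ps IH]; intros vs T; [reflexivity|].
  destruct vs as [v vs], T as [Tv Tvs]. simpl.
  rewrite (sem_new_fresh s p e al n c v Hc Nc Tv), (IH vs Tvs). reflexivity.
Qed.

Definition sym_reflects_freshness (sg : symbol NS BS Sym) : Prop :=
  forall vs w a, sym_int Mo sg vs w -> ~ in_supp (mact B (sym_res NS BS Sym res sg)) a w ->
    tup_fresh B a vs.

Lemma sem_app_map_new sg al n (ps : pats (sym_arity NS BS Sym arity sg)) e w :
  sym_reflects_freshness sg -> env_finsupp e ->
  sem _ (PApp sg (map_new al n ps)) e w <-> sem _ (PNew al n (PApp sg ps)) e w.
Proof.
  intros Hsg Fe. split.
  - intros [vs [Hs Hi]].
    destruct (exists_fresh_name e al _ Fe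
                (cofinite_and (cofinite_tup_fresh _ vs) (cofinite_fresh_elem _ w)))
      as [c [Hc [Nc [Tc Sc]]]].
    apply (sem_new_fresh _ _ e al n c w Hc Nc Sc). exists vs. split; [|exact Hi].
    apply (sems_map_new_fresh _ ps e al n c vs Hc Nc Tc), Hs.
  - intros [a [Ha [Na [[vs [Hs Hi]] Sa]]]]. exists vs. split; [|exact Hi].
    apply (sems_map_new_fresh _ ps e al n a vs Ha Na (Hsg vs w a Hi Sa)), Hs.
Qed.

Lemma pair_reflects_freshness t1 t2 : sym_reflects_freshness (SymPair t1 t2).
Proof.
  intros [x [y []]] w a Hw Sa. simpl in Hw. subst w.
  destruct (notin_supp_supports Sa) as [L [HL N]].
  assert (Sx : supports (mact B t1) L x) by (intros r Hr; exact (f_equal fst (HL r Hr))).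
  assert (Sy : supports (mact B t2) L y) by (intros r Hr; exact (f_equal snd (HL r Hr))).
  split; [|split; [|exact I]]; eapply supports_notin_supp; eassumption.
Qed.

Lemma sem_pair_new al n t1 t2 (p : pat t1) (q : pat t2) e w :
  env_finsupp e -> ~ name_free al n q ->
  sem _ (PApp (SymPair t1 t2) (PCons (PNew al n p) (PCons q PNil))) e w <->
  sem _ (PNew al n (PApp (SymPair t1 t2) (PCons p (PCons q PNil)))) e w.
Proof.
  intros Fe NF.
  rewrite <- (sem_app_map_new (SymPair t1 t2) al n (PCons p (PCons q PNil)) e w
                (pair_reflects_freshness t1 t2) Fe).
  cbn [map_new]. pose proof (fun y => sem_new_vacuous t2 q e al n y Fe NF) as V.
  split; intros [vs [[Hp [Hq _]] Hw]]; exists vs; repeat split; try assumption; apply V, Hq.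
Qed.

Lemma pequiv_of_sem s (p q : pat s) :
  (forall e v, env_finsupp e -> sem s p e v <-> sem s q e v) -> pequiv Mo p q.
Proof. intros H e W _ _ v. apply H, wf_env_finsupp, W. Qed.

End Semantics.

Theorem mainTheorem9
  (NS BS Sym : Type) (arity : Sym -> list (sort NS BS)) (res : Sym -> sort NS BS)
  (Mo : std_model NS BS Sym arity res) :
  (* (1) new distributes over conjunction *)
  (forall (al : NS) (n : nat) (s : sort NS BS) (p q : pat NS BS Sym arity res s),
      pequiv Mo (PAnd (PNew al n p) (PNew al n q)) (PNew al n (PAnd p q))) /\
  (forall (al : NS) (n : nat) (s : sort NS BS) (p q : pat NS BS Sym arity res s),
      ~ name_free al n q ->
      pequiv Mo (PNew al n (PAnd p q)) (PAnd (PNew al n p) q)) /\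
  (forall (al : NS) (n : nat) (s : sort NS BS) (p q : pat NS BS Sym arity res s),
      pequiv Mo (POr (PNew al n p) (PNew al n q)) (PNew al n (POr p q))) /\
  (* (2) new commutes with negation *)
  (forall (al : NS) (n : nat) (s : sort NS BS) (p : pat NS BS Sym arity res s),
      pequiv Mo (PNot (PNew al n p)) (PNew al n (PNot p))) /\
  (* (3) for distinct names a, b : alpha, [a](new b. phi) <=> new b. [a]phi *)
  (forall (al : NS) (n m : nat) (t : sort NS BS) (p : pat NS BS Sym arity res t),
      n <> m ->
      pequiv Mo
        (PApp (SymAbs al t) (PCons (PName al n) (PCons (PNew al m p) PNil)))
        (PNew al m (PApp (SymAbs al t) (PCons (PName al n) (PCons p PNil))))) /\
  (* (4) pairing *)
  (forall (al : NS) (n : nat) (t1 t2 : sort NS BS)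
          (p : pat NS BS Sym arity res t1) (q : pat NS BS Sym arity res t2),
      ~ name_free al n q ->
      pequiv Mo
        (PApp (SymPair t1 t2) (PCons (PNew al n p) (PCons q PNil)))
        (PNew al n (PApp (SymPair t1 t2) (PCons p (PCons q PNil))))) /\
  (* (4) general symbols whose interpretation does not create freshness *)
  (forall (sg : symbol NS BS Sym),
      (forall (vs : tup NS BS (base Mo) (sym_arity NS BS Sym arity sg))
              (w : M NS BS (base Mo) (sym_res NS BS Sym res sg)) (a : atom NS),
          sym_int Mo sg vs w ->
          ~ in_supp (mact (base Mo) (sym_res NS BS Sym res sg)) a w ->
          tup_fresh (base Mo) a vs) ->
      forall (al : NS) (n : nat) (ps : pats NS BS Sym arity res (sym_arity NS BS Sym arity sg)),
        pequiv Mo (PApp sg (map_new al n ps)) (PNew al n (PApp sg ps))).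
Proof.
  refine (conj _ (conj _ (conj _ (conj _ (conj _ (conj _ _)))))).
  - intros al n s p q. apply pequiv_of_sem. intros e v Fe. apply sem_new_and, Fe.
  - intros al n s p q NF. apply pequiv_of_sem. intros e v Fe. apply sem_new_and_nonfree; assumption.
  - intros al n s p q. apply pequiv_of_sem. intros e v Fe. apply sem_new_or, Fe.
  - intros al n s p. apply pequiv_of_sem. intros e v Fe. apply sem_new_not, Fe.
  - intros al n m t p Hnm. apply pequiv_of_sem. intros e v _. apply sem_abs_new, Hnm.
  - intros al n t1 t2 p q NF. apply pequiv_of_sem. intros e v Fe. apply sem_pair_new; assumption.
  - intros sg Hsg al n ps. apply pequiv_of_sem. intros e v Fe. apply sem_app_map_new; assumption.
Qed.
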